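(* Let $\mathscr{H}$ be a complex Hilbert space, $N(\cdot)$ a norm on $\mathbb{B}(\mathscr{H})$, and $B,C\in\mathbb{B}(\mathscr{H})$. Then for every $\theta\in\mathbb{R}$, $$\frac12 w_N(B+e^{i\theta}C)+\frac12|w_N(B)-w_N(C)|\leq w_{(N,e)}(B,C).$$
   Context: For $T\in\mathbb{B}(\mathscr{H})$: $\Re(T)=\frac12(T+T^* )$ and $w_N(T)=\sup_{\theta\in\mathbb{R}}N(\Re(e^{i\theta}T))$. For $B,C\in\mathbb{B}(\mathscr{H})$, $w_{(N,e)}(B,C)=\sup_{\lambda_1,\lambda_2\in\mathbb{C},\ |\lambda_1|^2+|\lambda_2|^2\leq 1}\sup_{\theta\in\mathbb{R}} N(\Re(e^{i\theta}(\lambda_1B+\lambda_2C)))$. *)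

From HB Require Import structures.
From mathcomp Require Import all_boot all_order all_algebra.
From mathcomp Require Import all_classical all_reals.
From mathcomp Require Import trigo.
From mathcomp Require Import complex.
Set Implicit Arguments. Unset Strict Implicit. Unset Printing Implicit Defensive.
Import Order.TTheory GRing.Theory Num.Theory.
Local Open Scope ring_scope.
Local Open Scope classical_set_scope.

Section Defs.
Variable R : realType.
Local Notation C := (R[i]).
Variable V : lmodType C.
Variable ip : V -> V -> C.

Definition is_inner_product : Prop :=
  [/\ (forall (a : C) (x y z : V), ip (a *: x + y) z = a * ip x z + ip y z),
      (forall x y : V, ip y x = (ip x y)^*),
      (forall x : V, 0 <= ip x x) &
      (forall x : V, ip x x = 0 -> x = 0)].

Definition hnorm (x : V) : R := Num.sqrt (complex.Re (ip x x)).

Definition ip_complete : Prop :=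
  forall u : nat -> V,
    (forall e : R, 0 < e -> exists n : nat, forall m k : nat,
        (n <= m)%N -> (n <= k)%N -> hnorm (u m - u k) < e) ->
    exists x : V, forall e : R, 0 < e -> exists n : nat, forall m : nat,
        (n <= m)%N -> hnorm (u m - x) < e.

Definition is_hilbert : Prop := is_inner_product /\ ip_complete.

Definition bounded_op (T : V -> V) : Prop :=
  (forall (a : C) (x y : V), T (a *: x + y) = a *: T x + T y) /\
  exists M : R, forall x : V, hnorm (T x) <= M * hnorm x.

Definition opadd (S T : V -> V) : V -> V := fun x => S x + T x.
Definition opscale (a : C) (T : V -> V) : V -> V := fun x => a *: T x.

Definition is_op_norm (N : (V -> V) -> R) : Prop :=
  [/\ (forall T, bounded_op T -> 0 <= N T),
      (forall T, bounded_op T -> N T = 0 -> T = (fun _ => 0)),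
      (forall (a : C) T, bounded_op T -> N (opscale a T) = complex.Re `|a| * N T) &
      (forall S T, bounded_op S -> bounded_op T -> N (opadd S T) <= N S + N T)].

Definition is_adjoint (T S : V -> V) : Prop :=
  forall x y : V, ip (T x) y = ip x (S y).

Definition adjoint (T : V -> V) : V -> V :=
  match pselect (exists S, is_adjoint T S) with
  | left h => projT1 (cid h)
  | right _ => fun _ => 0
  end.

Definition ReOp (T : V -> V) : V -> V :=
  fun x => (2%:R : C)^-1 *: (T x + adjoint T x).

Definition expi (t : R) : C := (cos t +i* sin t)%C.

Definition wN (N : (V -> V) -> R) (T : V -> V) : R :=
  sup [set N (ReOp (opscale (expi t) T)) | t in [set: R]].

Definition wNe (N : (V -> V) -> R) (B C' : V -> V) : R :=
  sup [set r : R | exists (l1 l2 : C) (t : R),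
         `|l1| ^+ 2 + `|l2| ^+ 2 <= 1 /\
         r = N (ReOp (opscale (expi t) (opadd (opscale l1 B) (opscale l2 C'))))].

End Defs.

(* Taking (l1, l2) = (1, 0) and (0, 1) gives w_N(B), w_N(C) <= w_(N,e)(B, C).
   As Re is real-linear and the factor e^{i theta} only shifts the parameter t,
   w_N is subadditive and rotation invariant, so the left-hand side is at most
   (w_N(B) + w_N(C))/2 + |w_N(B) - w_N(C)|/2 = max (w_N(B), w_N(C)).
   The sets whose suprema are taken are bounded by
   (N(B) + N(C) + N(adj B) + N(adj C))/2; this matters since [sup] of an
   unbounded set is a junk value.  Additivity of Re and boundedness of adjoints
   require every bounded operator to have an adjoint ([adjoint] is 0 otherwise):
   this is the Riesz representation theorem, proved by taking the point of
   least norm on the closed hyperplane {g = 1}, which exists by the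
   parallelogram law and completeness. *)

From HB Require Import structures.
From mathcomp Require Import all_boot all_order all_algebra.
From mathcomp Require Import all_classical all_reals.
From mathcomp Require Import trigo.
From mathcomp Require Import complex.
From mathcomp Require Import ring lra.
Import Order.TTheory GRing.Theory Num.Theory.
Local Open Scope ring_scope.
Local Open Scope classical_set_scope.

Section RealFacts.
Variable R : realFieldType.
Implicit Types a b c s w : R.

Lemma discriminant_le a b c : 0 <= a ->
  (forall t, 0 <= a * t ^+ 2 + 2 * b * t + c) -> b ^+ 2 <= a * c.
Proof.
move=> a_ge0 h; have [a0 | a_neq0] := eqVneq a 0.
  have [-> | b_neq0] := eqVneq b 0; first by rewrite a0 expr0n mul0r.
  have := h (- (c + 1) / (2 * b)); rewrite a0 mul0r add0r.
  have -> : 2 * b * (- (c + 1) / (2 * b)) = - (c + 1) by field.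
  lra.
have a_gt0 : 0 < a by rewrite lt_def a_neq0.
have := h (- b / a).
have -> : a * (- b / a) ^+ 2 + 2 * b * (- b / a) + c = c - b ^+ 2 / a by field.
by rewrite subr_ge0 ler_pdivrMr // mulrC.
Qed.

Lemma half_sum_add_half_dist_le s a b w : s <= a + b -> a <= w -> b <= w ->
  2^-1 * s + 2^-1 * `|a - b| <= w.
Proof. by have [] := lerP 0 (a - b) => [/ger0_norm|/ltr0_norm] ->; lra. Qed.

End RealFacts.

Lemma inv_succ_le (R : numFieldType) {m n : nat} :
  (n <= m)%N -> m.+1%:R^-1 <= n.+1%:R^-1 :> R.
Proof. by move=> le_nm; rewrite lef_pV2 ?posrE ?ltr0Sn // ler_nat. Qed.

Lemma exists_inv_succ_lt {R : archiRealFieldType} {e : R} : 0 < e ->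
  exists n, n.+1%:R^-1 < e.
Proof.
move=> e_gt0; exists (Num.Def.archi_bound e^-1).
rewrite invf_plt ?posrE ?ltr0Sn //.
have inv_ge0 : 0 <= e^-1 by rewrite invr_ge0 ltW.
by apply: lt_trans (archi_boundP inv_ge0) _; rewrite ltr_nat.
Qed.

Section ComplexFacts.
Context {R : realType}.
Implicit Types (z : R[i]) (c t : R).

Lemma Re_conjc z : complex.Re z^* = complex.Re z.
Proof. by case: z. Qed.

Lemma Re_realM c z : complex.Re (c%:C%C * z) = c * complex.Re z.
Proof. by case: z => x y /=; rewrite mul0r subr0. Qed.

Lemma Re_mulI z : complex.Re ('i%C * z) = - complex.Im z.
Proof. by rewrite mulrC ReiNIm. Qed.

Lemma ge0_complexE z : 0 <= z -> z = (complex.Re z)%:C%C.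
Proof. by move=> z_ge0; rewrite RRe_real // ger0_real. Qed.

Lemma Re_ge0 z : 0 <= z -> 0 <= complex.Re z.
Proof. by rewrite lecE => /andP[]. Qed.

Lemma Re_norm_ge0 z : 0 <= complex.Re `|z|.
Proof. exact: Re_ge0. Qed.

Lemma Re_norm_conj z : complex.Re `|z^*| = complex.Re `|z|.
Proof. by rewrite norm_conjC. Qed.

Lemma Re_norm_expi t : complex.Re `|expi t| = 1.
Proof. by rewrite normc_def /= cos2Dsin2 sqrtr1. Qed.

Lemma Re_norm_half : complex.Re `|2^-1 : R[i]| = 2^-1.
Proof.
rewrite ger0_norm ?invr_ge0 ?ler0n //.
by rewrite -(rmorph_nat (real_complex R)) -fmorphV.
Qed.

Lemma Re_norm_real c : complex.Re `|c%:C%C| = `|c|.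
Proof. by rewrite normc_def /= expr0n addr0 sqrtr_sqr. Qed.

Lemma Re_norm_le1 {z z'} : `|z| ^+ 2 + `|z'| ^+ 2 <= 1 -> complex.Re `|z| <= 1.
Proof.
move=> h; suff : `|z| <= 1 by rewrite lecE => /andP[].
rewrite -(expr_le1 (n := 2)) //; apply: le_trans h.
by rewrite lerDl exprn_ge0.
Qed.

Lemma expiD t t' : expi t * expi t' = expi (t + t').
Proof.
by apply/eqP; rewrite eq_complex /= cosD sinD; apply/andP; split; apply/eqP; ring.
Qed.

End ComplexFacts.

Section Hilbert.
Context {R : realType} {V : lmodType R[i]} {ip : V -> V -> R[i]}.
Hypothesis ip_inner : is_inner_product ip.
Implicit Types (x y z : V) (a : R[i]) (c : R).
Local Notation rip x y := (complex.Re (ip x y)).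
Local Notation hn := (hnorm ip).

Lemma ip_conj x y : ip y x = (ip x y)^*.
Proof. by case: ip_inner => _ conj _ _; apply: conj. Qed.

Lemma ip_ge0 x : 0 <= ip x x.
Proof. by case: ip_inner => _ _ ge0 _; apply: ge0. Qed.

Lemma ip_eq0 x : ip x x = 0 -> x = 0.
Proof. by case: ip_inner => _ _ _; apply. Qed.

Lemma ipZDl a x y z : ip (a *: x + y) z = a * ip x z + ip y z.
Proof. by case: ip_inner => h _ _ _; apply: h. Qed.

Lemma ip0l z : ip 0 z = 0.
Proof.
by have := ipZDl 1 0 0 z; rewrite scaler0 addr0 mul1r -{1}[ip 0 z]addr0 => /addrI.
Qed.

Lemma ipZl a x z : ip (a *: x) z = a * ip x z.
Proof. by rewrite -[a *: x]addr0 ipZDl ip0l addr0. Qed.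

Lemma ipDl x y z : ip (x + y) z = ip x z + ip y z.
Proof. by rewrite -[x]scale1r ipZDl mul1r scale1r. Qed.

Lemma ipNl x z : ip (- x) z = - ip x z.
Proof. by rewrite -scaleN1r ipZl mulN1r. Qed.

Lemma ipZr a x z : ip z (a *: x) = a^* * ip z x.
Proof. by rewrite ip_conj ipZl rmorphM [ip z x]ip_conj. Qed.

Lemma ipDr x y z : ip z (x + y) = ip z x + ip z y.
Proof. by rewrite ip_conj ipDl rmorphD [ip z x]ip_conj [ip z y]ip_conj. Qed.

Lemma ip0r z : ip z 0 = 0.
Proof. by rewrite ip_conj ip0l conjC0. Qed.

Lemma ipNr x z : ip z (- x) = - ip z x.
Proof. by rewrite ip_conj ipNl rmorphN [ip z x]ip_conj. Qed.

Lemma ip_diagE x : ip x x = (rip x x)%:C%C.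
Proof. exact/ge0_complexE/ip_ge0. Qed.

Lemma ip_injr u v : (forall x, ip x u = ip x v) -> u = v.
Proof.
move=> h; apply/eqP; rewrite -subr_eq0; apply/eqP/ip_eq0.
by rewrite ipDr ipNr h subrr.
Qed.

Lemma rip_sym x y : rip y x = rip x y.
Proof. by rewrite ip_conj Re_conjc. Qed.

Lemma ripDl x y z : rip (x + y) z = rip x z + rip y z.
Proof. by rewrite ipDl raddfD. Qed.

Lemma ripZl c x z : rip (c%:C%C *: x) z = c * rip x z.
Proof. by rewrite ipZl Re_realM. Qed.

Lemma ripZr c x z : rip z (c%:C%C *: x) = c * rip z x.
Proof. by rewrite rip_sym ripZl rip_sym. Qed.

Lemma ripNl x z : rip (- x) z = - rip x z.
Proof. by rewrite ipNl raddfN. Qed.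

Lemma hnorm_ge0 x : 0 <= hn x.
Proof. exact: sqrtr_ge0. Qed.

Lemma hnorm_sqr x : hn x ^+ 2 = rip x x.
Proof. by rewrite sqr_sqrtr // Re_ge0 // ip_ge0. Qed.

Lemma hnorm_eq0 x : hn x = 0 -> x = 0.
Proof.
by move=> hx0; apply: ip_eq0; rewrite ip_diagE -hnorm_sqr hx0 expr0n.
Qed.

Lemma hnormZ a x : hn (a *: x) = complex.Re `|a| * hn x.
Proof.
have sqrZ : rip (a *: x) (a *: x) = complex.Re `|a| ^+ 2 * rip x x.
  rewrite ipZl ipZr mulrA -normCK ip_diagE.
  by rewrite [in LHS](ge0_complexE _ (normr_ge0 a)) -rmorphXn -rmorphM.
by rewrite /hnorm sqrZ sqrtrM ?sqr_ge0 // sqrtr_sqr ger0_norm // Re_norm_ge0.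
Qed.

Lemma hnormZr c x : hn (c%:C%C *: x) = `|c| * hn x.
Proof. by rewrite hnormZ Re_norm_real. Qed.

Lemma hnormN x : hn (- x) = hn x.
Proof. by rewrite -scaleN1r hnormZ normrN1 mul1r. Qed.

Lemma hnormB_sym x y : hn (x - y) = hn (y - x).
Proof. by rewrite -hnormN opprB. Qed.

Lemma hnormD_sqr x y : hn (x + y) ^+ 2 = hn x ^+ 2 + 2 * rip x y + hn y ^+ 2.
Proof. by rewrite !hnorm_sqr !ripDl ![rip _ (x + y)]rip_sym !ripDl (rip_sym x y); ring. Qed.

Lemma hnormB_sqr x y : hn (x - y) ^+ 2 = hn x ^+ 2 - 2 * rip x y + hn y ^+ 2.
Proof. by rewrite hnormD_sqr hnormN rip_sym ripNl rip_sym; ring. Qed.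

Lemma parallelogram x y :
  hn (x + y) ^+ 2 + hn (x - y) ^+ 2 = 2 * hn x ^+ 2 + 2 * hn y ^+ 2.
Proof. by rewrite hnormD_sqr hnormB_sqr; ring. Qed.

Lemma Re_ip_norm_le x y : `|rip x y| <= hn x * hn y.
Proof.
rewrite -(@ler_pXn2r _ 2) ?nnegrE ?normr_ge0 ?mulr_ge0 ?hnorm_ge0 //.
rewrite real_normK ?num_real // exprMn mulrC; apply: discriminant_le => [|t].
  exact: sqr_ge0.
apply: le_trans (sqr_ge0 (hn (x + t%:C%C *: y))) _.
rewrite hnormD_sqr ripZr [hn (_ *: y) ^+ 2]hnorm_sqr ripZl ripZr -hnorm_sqr.
lra.
Qed.

Lemma hnormD x y : hn (x + y) <= hn x + hn y.
Proof.
rewrite -(@ler_pXn2r _ 2) ?nnegrE ?addr_ge0 ?hnorm_ge0 // hnormD_sqr.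
have := Re_ip_norm_le x y; have := ler_norm (rip x y).
have := hnorm_ge0 x; have := hnorm_ge0 y.
nra.
Qed.

Hypothesis ip_compl : ip_complete ip.

Section RieszRepresentation.
Context {g : V -> R} {K : R}.
Hypotheses (gD : forall x y, g (x + y) = g x + g y)
  (gZ : forall (c : R) x, g (c%:C%C *: x) = c * g x)
  (g_bounded : forall x, `|g x| <= K * hn x).

Let g0 : g 0 = 0.
Proof. by have := gZ 0 0; rewrite scaler0 mul0r. Qed.

Let gN x : g (- x) = - g x.
Proof. by rewrite -scaleN1r -(rmorphN1 (real_complex R)) gZ mulN1r. Qed.

Let gB x y : g (x - y) = g x - g y.
Proof. by rewrite gD gN. Qed.

Let min_level := inf [set hn x ^+ 2 | x in [set x | g x = 1]].
Let eps (n : nat) : R := n.+1%:R^-1.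

Lemma min_level_le x : g x = 1 -> min_level <= hn x ^+ 2.
Proof.
move=> gx1; apply: ge_inf; last by exists x.
by exists 0 => _ [y _ <-]; exact: sqr_ge0.
Qed.

Lemma level_closed w :
  (forall e, 0 < e -> exists x, g x = 1 /\ hn (x - w) < e) -> g w = 1.
Proof.
move=> approx; apply/eqP; rewrite -subr_eq0 -normr_le0; apply/ler_addgt0Pr => e e_gt0.
have K1_gt0 : 0 < `|K| + 1 by rewrite ltr_wpDl.
have [x [gx1 near_x]] := approx _ (divr_gt0 e_gt0 K1_gt0).
rewrite add0r distrC -gx1 -gB; apply: le_trans (g_bounded _) _.
have := ler_wpM2r (hnorm_ge0 (x - w)) (ler_norm K).
have := hnorm_ge0 (x - w); rewrite ltr_pdivlMr // in near_x.
nra.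
Qed.

Lemma level_limit_min w : g w = 1 ->
  (forall e, 0 < e -> exists x, [/\ g x = 1, hn x ^+ 2 < min_level + e & hn (x - w) < e]) ->
  hn w ^+ 2 <= min_level.
Proof.
move=> gw1 approx; apply/ler_addgt0Pr => e e_gt0.
pose d := Num.min (e / 4) 1.
have d_gt0 : 0 < d by rewrite lt_min ltr01 andbT divr_gt0.
have [d_le d_le1] : d <= e / 4 /\ d <= 1 by apply/andP; rewrite -le_min.
have [x [gx1 x_min near_x]] := approx d d_gt0.
(* [2x - w] lies on the level set; the parallelogram law compares it with [w]. *)
have far : min_level <= hn (x - (w - x)) ^+ 2.
  by rewrite min_level_le // !gB gx1 gw1 subrr subr0.
have near_x2 : hn (x - w) ^+ 2 <= e / 4 by have := hnorm_ge0 (x - w); nra.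
have := parallelogram x (w - x); rewrite [x + _]addrC subrK (hnormB_sym w x).
lra.
Qed.

Lemma level_sqr_dist x y (a b : R) : g x = 1 -> g y = 1 ->
  hn x ^+ 2 <= min_level + a -> hn y ^+ 2 <= min_level + b ->
  hn (x - y) ^+ 2 <= 2 * a + 2 * b.
Proof.
move=> gx1 gy1 x_min y_min.
have mid : min_level <= 4^-1 * hn (x + y) ^+ 2.
  have -> : 4^-1 * hn (x + y) ^+ 2 = hn ((2^-1)%:C%C *: (x + y)) ^+ 2.
    by rewrite hnormZr exprMn ger0_norm ?invr_ge0 ?ler0n //; congr (_ * _); field.
  by rewrite min_level_le // gZ gD gx1 gy1 mulVf ?pnatr_eq0.
have := parallelogram x y; lra.
Qed.

Lemma exists_level_min : (exists u, g u = 1) -> exists2 w, g w = 1 & hn w ^+ 2 <= min_level.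
Proof.
case=> u gu1.
have level_inf : has_inf [set hn x ^+ 2 | x in [set x | g x = 1]].
  split; first by exists (hn u ^+ 2), u.
  by exists 0 => _ [y _ <-]; exact: sqr_ge0.
have /choice[xs xsP] : forall n, exists x, g x = 1 /\ hn x ^+ 2 < min_level + eps n.
  move=> n; have eps_gt0 : 0 < eps n by rewrite invr_gt0 ltr0Sn.
  by have [_ [x gx1 <-] x_min] := inf_adherent eps_gt0 level_inf; exists x.
have xs_cauchy e : 0 < e ->
    exists n, forall m k, (n <= m)%N -> (n <= k)%N -> hn (xs m - xs k) < e.
  move=> e_gt0; have [n small] : exists n, eps n < e ^+ 2 / 4.
    exact: exists_inv_succ_lt (divr_gt0 (exprn_gt0 2 e_gt0) (ltr0Sn R 3)).
  exists n => m k le_nm le_nk.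
  rewrite -(@ltr_pXn2r _ 2) ?nnegrE ?hnorm_ge0 ?ltW //.
  have [[gm1 m_min] [gk1 k_min]] := (xsP m, xsP k).
  apply: le_lt_trans (level_sqr_dist _ _ _ _ gm1 gk1 (ltW m_min) (ltW k_min)) _.
  have le_m : eps m <= eps n := inv_succ_le R le_nm.
  have le_k : eps k <= eps n := inv_succ_le R le_nk.
  lra.
have [w lim_w] := ip_compl _ xs_cauchy.
have approx e : 0 < e -> exists x, [/\ g x = 1, hn x ^+ 2 < min_level + e & hn (x - w) < e].
  move=> e_gt0; have [n1 small] : exists n, eps n < e := exists_inv_succ_lt e_gt0.
  have [n2 near] := lim_w e e_gt0; have [gx1 x_min] := xsP (maxn n1 n2).
  exists (xs (maxn n1 n2)); split => //.
    apply: lt_le_trans x_min _; rewrite lerD2l.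
    exact/ltW/(le_lt_trans (inv_succ_le R (leq_maxl n1 n2))).
  exact/near/leq_maxr.
have gw1 : g w = 1.
  by apply: level_closed => e /approx [x [gx1 _ near_x]]; exists x.
by exists w => //; apply: level_limit_min.
Qed.

Lemma level_min_orth w k : g w = 1 -> hn w ^+ 2 <= min_level -> g k = 0 -> rip w k = 0.
Proof.
move=> gw1 w_min gk0.
have : rip w k ^+ 2 <= hn k ^+ 2 * 0.
  apply: discriminant_le (sqr_ge0 _) _ => t.
  have := min_level_le (w + t%:C%C *: k); rewrite gD gZ gk0 mulr0 addr0 => /(_ gw1).
  rewrite hnormD_sqr hnormZr ripZr exprMn real_normK ?num_real //; lra.
by rewrite mulr0 => sq_le0; apply/eqP; rewrite -sqrf_eq0 eq_le sq_le0 sqr_ge0.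
Qed.

Lemma riesz_real : exists z, forall x, g x = rip x z.
Proof.
have [[u gu_neq0] | g_eq0] := pselect (exists u, g u != 0); last first.
  exists 0 => x; rewrite ip0r; apply: contra_notP g_eq0 => gx_neq0.
  by exists x; apply/eqP.
have [|w gw1 w_min] := exists_level_min.
  by exists ((g u)^-1%:C%C *: u); rewrite gZ mulVf.
have w_neq0 : hn w ^+ 2 != 0.
  rewrite sqrf_eq0; apply/eqP => /hnorm_eq0 w0.
  by move: gw1; rewrite w0 g0 => /esym/eqP; rewrite oner_eq0.
exists ((hn w ^+ 2)^-1%:C%C *: w) => x; rewrite ripZr.
have := level_min_orth w (x - (g x)%:C%C *: w) gw1 w_min.
rewrite gB gZ gw1 mulr1 subrr => /(_ erefl) /eqP.
rewrite rip_sym ripDl ripNl ripZl -hnorm_sqr subr_eq0 => /eqP ->.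
by rewrite mulrCA mulVf ?mulr1.
Qed.

End RieszRepresentation.

Section BoundedOperators.
Implicit Types S T : V -> V.

Lemma bounded_opZD {T} : bounded_op ip T -> forall a x y, T (a *: x + y) = a *: T x + T y.
Proof. by case. Qed.

Lemma bounded_op0 {T} : bounded_op ip T -> T 0 = 0.
Proof.
move=> /bounded_opZD T_lin.
by have := T_lin 1 0 0; rewrite scaler0 addr0 scale1r -{1}[T 0]addr0 => /addrI.
Qed.

Lemma bounded_opZ {T} : bounded_op ip T -> forall a x, T (a *: x) = a *: T x.
Proof.
move=> T_bounded a x.
by rewrite -[a *: x]addr0 (bounded_opZD T_bounded) (bounded_op0 T_bounded) addr0.
Qed.

Lemma bounded_opD {T} : bounded_op ip T -> forall x y, T (x + y) = T x + T y.
Proof. by move=> T_bounded x y; rewrite -[x]scale1r (bounded_opZD T_bounded) !scale1r. Qed.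

Lemma bounded_op_add {S T} :
  bounded_op ip S -> bounded_op ip T -> bounded_op ip (opadd S T).
Proof.
move=> S_bounded T_bounded; split => [a x y|].
  by rewrite /opadd (bounded_opZD S_bounded) (bounded_opZD T_bounded) scalerDr addrACA.
have [[_ [MS S_le]] [_ [MT T_le]]] := (S_bounded, T_bounded).
exists (MS + MT) => x; rewrite mulrDl; apply: le_trans (hnormD _ _) _.
exact: lerD.
Qed.

Lemma bounded_op_scale a {T} : bounded_op ip T -> bounded_op ip (opscale a T).
Proof.
move=> T_bounded; split => [b x y|].
  by rewrite /opscale (bounded_opZD T_bounded) scalerDr !scalerA mulrC.
have [_ [M T_le]] := T_bounded.
exists (complex.Re `|a| * M) => x; rewrite /opscale hnormZ -mulrA.
exact: (ler_wpM2l (Re_norm_ge0 a) (T_le x)).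
Qed.

Lemma adjoint_exists {T} : bounded_op ip T -> exists S, is_adjoint ip T S.
Proof.
move=> T_bounded; have [_ [M T_le]] := T_bounded.
suff /choice[S S_adj] : forall y, exists z, forall x, ip (T x) y = ip x z by exists S.
move=> y; pose g x := rip (T x) y.
have gD x x' : g (x + x') = g x + g x' by rewrite /g (bounded_opD T_bounded) ripDl.
have gZ (c : R) x : g (c%:C%C *: x) = c * g x by rewrite /g (bounded_opZ T_bounded) ripZl.
have g_bounded x : `|g x| <= M * hn y * hn x.
  apply: le_trans (Re_ip_norm_le _ _) _; rewrite mulrAC.
  exact: (ler_wpM2r (hnorm_ge0 y) (T_le x)).
have [z z_re] := riesz_real gD gZ g_bounded.
exists z => x; apply/eqP; rewrite eq_complex; apply/andP; split; apply/eqP.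
  exact: z_re.
(* The imaginary part is the real part at ['i *: x]. *)
have := z_re ('i%C *: x); rewrite /g (bounded_opZ T_bounded) !ipZl !Re_mulI.
exact: oppr_inj.
Qed.

Lemma adjointP {T} : bounded_op ip T -> is_adjoint ip T (adjoint ip T).
Proof.
rewrite /adjoint => T_bounded; case: pselect => [adj | no_adj].
  exact: projT2 (cid adj).
by have := adjoint_exists T_bounded.
Qed.

Lemma adjoint_unique {T S S'} : is_adjoint ip T S -> is_adjoint ip T S' -> S = S'.
Proof. by move=> S_adj S'_adj; apply/funext => y; apply: ip_injr => x; rewrite -S_adj. Qed.

Lemma adjoint_bounded {T} : bounded_op ip T -> bounded_op ip (adjoint ip T).
Proof.
move=> T_bounded; have S_adj := adjointP T_bounded; set S := adjoint ip T in S_adj *.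
split => [a x y|].
  by apply: ip_injr => z; rewrite -S_adj !ipDr !ipZr !S_adj.
have [_ [M T_le]] := T_bounded; exists `|M| => y.
have S_sqr : hn (S y) ^+ 2 <= `|M| * hn y * hn (S y).
  rewrite hnorm_sqr -S_adj; apply: le_trans (ler_norm _) _.
  apply: le_trans (Re_ip_norm_le _ _) _; rewrite mulrAC.
  apply: (ler_wpM2r (hnorm_ge0 y)); apply: le_trans (T_le _) _.
  exact: (ler_wpM2r (hnorm_ge0 _) (ler_norm M)).
have := hnorm_ge0 (S y); have := mulr_ge0 (normr_ge0 M) (hnorm_ge0 y).
nra.
Qed.

Lemma adjoint_add {S T} : bounded_op ip S -> bounded_op ip T ->
  adjoint ip (opadd S T) = opadd (adjoint ip S) (adjoint ip T).
Proof.
move=> S_bounded T_bounded.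
apply: adjoint_unique (adjointP (bounded_op_add S_bounded T_bounded)) _ => x y.
by rewrite /opadd ipDl ipDr (adjointP S_bounded) (adjointP T_bounded).
Qed.

Lemma adjoint_scale a {T} : bounded_op ip T ->
  adjoint ip (opscale a T) = opscale a^* (adjoint ip T).
Proof.
move=> T_bounded; apply: adjoint_unique (adjointP (bounded_op_scale a T_bounded)) _ => x y.
by rewrite /opscale ipZl ipZr conjCK (adjointP T_bounded).
Qed.

End BoundedOperators.

End Hilbert.

Section NumericalRadius.
Context {R : realType} {V : lmodType R[i]} {ip : V -> V -> R[i]}.
Hypotheses (ip_inner : is_inner_product ip) (ip_compl : ip_complete ip).
Variable N : (V -> V) -> R.
Hypothesis N_norm : is_op_norm ip N.
Implicit Types (S T B C : V -> V) (a : R[i]).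

Local Notation bounded := (bounded_op ip).
Local Notation adj := (adjoint ip).
Local Notation Re_op := (ReOp ip).
Local Notation wN_set T := [set N (Re_op (opscale (expi t) T)) | t in [set: R]].
Local Notation wNe_set B C := [set r : R | exists (l1 l2 : R[i]) (t : R),
  `|l1| ^+ 2 + `|l2| ^+ 2 <= 1 /\
  r = N (Re_op (opscale (expi t) (opadd (opscale l1 B) (opscale l2 C))))].

Lemma N_ge0 {T} : bounded T -> 0 <= N T.
Proof. by case: N_norm => ge0 _ _ _; apply: ge0. Qed.

Lemma N_scale a {T} : bounded T -> N (opscale a T) = complex.Re `|a| * N T.
Proof. by case: N_norm => _ _ hom _; apply: hom. Qed.

Lemma N_add {S T} : bounded S -> bounded T -> N (opadd S T) <= N S + N T.
Proof. by case: N_norm => _ _ _ tri; apply: tri. Qed.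

Lemma ReOpE T : Re_op T = opscale 2^-1 (opadd T (adj T)).
Proof. by []. Qed.

Lemma ReOp_bounded {T} : bounded T -> bounded (Re_op T).
Proof.
move=> T_bounded; rewrite ReOpE; apply: (bounded_op_scale ip_inner).
apply: (bounded_op_add ip_inner T_bounded).
exact: (adjoint_bounded ip_inner ip_compl T_bounded).
Qed.

Lemma ReOp_add {S T} : bounded S -> bounded T ->
  Re_op (opadd S T) = opadd (Re_op S) (Re_op T).
Proof.
move=> S_bounded T_bounded.
rewrite !ReOpE (adjoint_add ip_inner ip_compl S_bounded T_bounded).
by apply/funext => x; rewrite /opadd -scalerDr addrACA.
Qed.

Lemma N_ReOp_le {T} : bounded T -> N (Re_op T) <= 2^-1 * (N T + N (adj T)).
Proof.
move=> T_bounded; have T'_bounded := adjoint_bounded ip_inner ip_compl T_bounded.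
rewrite ReOpE N_scale ?Re_norm_half.
  by rewrite ler_wpM2l ?invr_ge0 ?ler0n // N_add.
exact: (bounded_op_add ip_inner T_bounded T'_bounded).
Qed.

Lemma N_combination_le a b e {S T} : bounded S -> bounded T ->
  complex.Re `|a| <= 1 -> complex.Re `|b| <= 1 -> complex.Re `|e| <= 1 ->
  N (opscale e (opadd (opscale a S) (opscale b T))) <= N S + N T.
Proof.
move=> S_bounded T_bounded a_le1 b_le1 e_le1.
have aS_bounded := bounded_op_scale ip_inner a S_bounded.
have bT_bounded := bounded_op_scale ip_inner b T_bounded.
have abST_bounded := bounded_op_add ip_inner aS_bounded bT_bounded.
rewrite N_scale //.
have := N_add aS_bounded bT_bounded; rewrite !N_scale //.
have := N_ge0 abST_bounded.
have := N_ge0 S_bounded; have := N_ge0 T_bounded.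
have := Re_norm_ge0 a; have := Re_norm_ge0 b; have := Re_norm_ge0 e.
nra.
Qed.

Lemma N_ReOp_combination_le l1 l2 t {B C} : bounded B -> bounded C ->
  `|l1| ^+ 2 + `|l2| ^+ 2 <= 1 ->
  N (Re_op (opscale (expi t) (opadd (opscale l1 B) (opscale l2 C))))
    <= 2^-1 * (N B + N C + (N (adj B) + N (adj C))).
Proof.
move=> B_bounded C_bounded l_le1.
have l1_le1 := Re_norm_le1 l_le1.
have l2_le1 : complex.Re `|l2| <= 1 by apply: (@Re_norm_le1 _ _ l1); rewrite addrC.
have lB_bounded := bounded_op_scale ip_inner l1 B_bounded.
have lC_bounded := bounded_op_scale ip_inner l2 C_bounded.
have lBC_bounded := bounded_op_add ip_inner lB_bounded lC_bounded.
apply: le_trans (N_ReOp_le (bounded_op_scale ip_inner (expi t) lBC_bounded)) _.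
rewrite ler_wpM2l ?invr_ge0 ?ler0n //.
rewrite (adjoint_scale ip_inner ip_compl _ lBC_bounded).
rewrite (adjoint_add ip_inner ip_compl lB_bounded lC_bounded).
rewrite (adjoint_scale ip_inner ip_compl _ B_bounded).
rewrite (adjoint_scale ip_inner ip_compl _ C_bounded).
apply: lerD; apply: N_combination_le; rewrite ?Re_norm_conj ?Re_norm_expi //.
  exact: (adjoint_bounded ip_inner ip_compl B_bounded).
exact: (adjoint_bounded ip_inner ip_compl C_bounded).
Qed.

Lemma wNe_set_ub {B C} : bounded B -> bounded C -> has_ubound (wNe_set B C).
Proof.
move=> B_bounded C_bounded; exists (2^-1 * (N B + N C + (N (adj B) + N (adj C)))).
by move=> _ [l1 [l2 [t [l_le1 ->]]]]; apply: N_ReOp_combination_le.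
Qed.

Lemma wN_set_le_wNe_l {B C} : bounded B -> bounded C -> ubound (wN_set B) (wNe ip N B C).
Proof.
move=> B_bounded C_bounded _ [t _ <-]; apply: (ub_le_sup (wNe_set_ub B_bounded C_bounded)).
exists 1, 0, t; split; first by rewrite normr1 normr0 expr1n expr0n addr0.
congr (N (Re_op (opscale _ _))).
by apply/funext => x; rewrite /opadd /opscale scale1r scale0r addr0.
Qed.

Lemma wN_set_le_wNe_r {B C} : bounded B -> bounded C -> ubound (wN_set C) (wNe ip N B C).
Proof.
move=> B_bounded C_bounded _ [t _ <-]; apply: (ub_le_sup (wNe_set_ub B_bounded C_bounded)).
exists 0, 1, t; split; first by rewrite normr1 normr0 expr1n expr0n add0r.
congr (N (Re_op (opscale _ _))).
by apply/funext => x; rewrite /opadd /opscale scale1r scale0r add0r.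
Qed.

Lemma wN_set_rot theta T : wN_set (opscale (expi theta) T) = wN_set T.
Proof.
have rot t : opscale (expi t) (opscale (expi theta) T) = opscale (expi (t + theta)) T.
  by apply/funext => x; rewrite /opscale scalerA expiD.
apply/seteqP; split => _ [t _ <-].
  by exists (t + theta) => //; rewrite rot.
by exists (t - theta) => //; rewrite rot subrK.
Qed.

Lemma wN_rot theta T : wN ip N (opscale (expi theta) T) = wN ip N T.
Proof. by rewrite /wN wN_set_rot. Qed.

Lemma wN_le_ub {T w} : ubound (wN_set T) w -> wN ip N T <= w.
Proof. by apply: ge_sup; exists (N (Re_op (opscale (expi 0) T))), 0. Qed.

Lemma wN_add_le {S T} : bounded S -> bounded T ->
  has_ubound (wN_set S) -> has_ubound (wN_set T) ->
  wN ip N (opadd S T) <= wN ip N S + wN ip N T.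
Proof.
move=> S_bounded T_bounded S_ub T_ub; apply: wN_le_ub => _ [t _ <-].
have eS_bounded := bounded_op_scale ip_inner (expi t) S_bounded.
have eT_bounded := bounded_op_scale ip_inner (expi t) T_bounded.
have -> : opscale (expi t) (opadd S T) = opadd (opscale (expi t) S) (opscale (expi t) T).
  by apply/funext => x; rewrite /opscale /opadd scalerDr.
rewrite (ReOp_add eS_bounded eT_bounded).
apply: le_trans (N_add (ReOp_bounded eS_bounded) (ReOp_bounded eT_bounded)) _.
by apply: lerD; apply: ub_le_sup => //; exists t.
Qed.

End NumericalRadius.

Theorem theorem2p11 (R : realType) (V : lmodType R[i]) (ip : V -> V -> R[i])
  (HH : is_hilbert ip) (N : (V -> V) -> R) (HN : is_op_norm ip N)
  (B C : V -> V) (HB : bounded_op ip B) (HC : bounded_op ip C) (theta : R) :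
  2^-1 * wN ip N (opadd B (opscale (expi theta) C))
    + 2^-1 * `|wN ip N B - wN ip N C| <= wNe ip N B C.
Proof.
have [ip_inner ip_compl] := HH.
have B_ub := wN_set_le_wNe_l ip_inner ip_compl N HN HB HC.
have C_ub := wN_set_le_wNe_r ip_inner ip_compl N HN HB HC.
apply: half_sum_add_half_dist_le; last 2 first.
- exact: (wN_le_ub N B_ub).
- exact: (wN_le_ub N C_ub).
have eC_bounded := bounded_op_scale ip_inner (expi theta) HC.
rewrite -(wN_rot N theta C).
apply: (wN_add_le ip_inner ip_compl N HN HB eC_bounded); first by exists (wNe ip N B C).
by rewrite wN_set_rot; exists (wNe ip N B C).
Qed.
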